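(* Let $n$ be even and $F\colon\mathbb F_2^n\to\mathbb F_2^n$ a quadratic function that is CCZ-equivalent to a permutation. Then $|N_F|\ge 3\cdot(2^{n/2}-1)$ and $N_F$ is a $3$-fold blocking set of $\mathrm{PG}(n-1,2)$ with respect to $(n/2)$-spaces, i.e. every subspace $U\le\mathbb F_2^n$ with $\dim U=\frac n2+1$ satisfies $|U\cap N_F|\ge3$.
   Context: $\langle\cdot,\cdot\rangle$ is the standard dot product; $F_b(x)=\langle b,F(x)\rangle$. $F$ is quadratic if each $F_b$ is a quadratic form plus an affine function. $F_b$ is bent if $|\sum_x(-1)^{F_b(x)+\langle x,a\rangle}|=2^{n/2}$ for all $a$. $N_F=\{b\in\mathbb F_2^n\setminus\{0\}\colon F_b\text{ not bent}\}$. Two functions $F,G\colon\mathbb F_2^n\to\mathbb F_2^n$ are CCZ-equivalent if some affine permutation of $\mathbb F_2^{2n}$ maps the graph $\{(x,F(x))\}$ onto the graph $\{(x,G(x))\}$. $\mathrm{PG}(n-1,2)$ is identified with $\mathbb F_2^n\setminus\{0\}$; an $(n/2)$-space is $U\setminus\{0\}$ for a subspace $U$ of dimension $n/2+1$. *)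

From HB Require Import structures.
From mathcomp Require Import all_boot all_order all_algebra.
Set Implicit Arguments.
Unset Strict Implicit.
Unset Printing Implicit Defensive.
Import GRing.Theory Num.Theory.
Local Open Scope ring_scope.

Notation vec n := 'rV['F_2]_n.

Definition dot n (x y : vec n) : 'F_2 := \sum_(i < n) x 0 i * y 0 i.

Definition comp_fun n (F : vec n -> vec n) (b : vec n) : vec n -> 'F_2 :=
  fun x => dot b (F x).

Definition quadratic_fun n (f : vec n -> 'F_2) : Prop :=
  exists (A : 'M['F_2]_n) (c : vec n) (d : 'F_2),
    forall x, f x = \sum_(i < n) \sum_(j < n) A i j * x 0 i * x 0 j + dot c x + d.

Definition quadratic n (F : vec n -> vec n) : Prop :=
  forall b, quadratic_fun (comp_fun F b).

Definition walsh n (f : vec n -> 'F_2) (a : vec n) : int :=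
  \sum_(x : vec n) (-1) ^+ (nat_of_ord (f x + dot x a)).

Definition bent n (f : vec n -> 'F_2) : bool :=
  [forall a : vec n, `|walsh f a| == (2 ^ n./2)%:Z].

Definition NF n (F : vec n -> vec n) : {set vec n} :=
  [set b : vec n | (b != 0) && ~~ bent (comp_fun F b)].

Definition graph n (F : vec n -> vec n) : {set 'rV['F_2]_(n + n)} :=
  [set row_mx x (F x) | x : vec n].

Definition CCZ_equiv n (F G : vec n -> vec n) : Prop :=
  exists (M : 'M['F_2]_(n + n)) (v : 'rV['F_2]_(n + n)),
    M \in unitmx /\ [set z *m M + v | z in graph F] = graph G.

From HB Require Import structures.
From mathcomp Require Import all_boot all_order all_algebra all_field.
From mathcomp Require Import zify ring.
Import GRing.Theory Num.Theory.
Set Implicit Arguments.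
Unset Strict Implicit.
Unset Printing Implicit Defensive.
Local Open Scope ring_scope.

(** A CCZ-equivalence to a permutation [G] maps the subspaces [F_2^n x 0] and
    [0 x F_2^n] of [F_2^2n], on which the Walsh transform of the graph of [G]
    vanishes off the origin, onto subspaces of Walsh zeros of the graph of [F];
    their projections [P1], [P2] onto the second coordinate span [F_2^n], and
    no nonzero [b] in [P1] or [P2] gives a bent component [F_b].
    For quadratic [F] every component is either bent, with Walsh values
    [+-2^(n/2)], or has all Walsh values divisible by [2^(n/2+1)]; as
    [sum_(b in U) W_(F_b)(0)] is a multiple of [|U|], an [(n/2+1)]-space [U]
    contains an even number of bent components, i.e. an odd number of points
    of [N_F].  One such point would force [U :&: P1 + U :&: P2] into a line,
    against dimension; and with [Z <= P1] of dimension [n/2], [N_F] contains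
    the nonzero vectors of [P1] and at least two points of every coset
    [w + Z], [w] a nonzero vector of a complement of [P1] in [P2]. *)

Lemma addn_half_even n : ~~ odd n -> (n./2 + n./2)%N = n.
Proof. by move=> ev; rewrite addnn -{2}(odd_double_half n) (negbTE ev). Qed.

Lemma sqrn_eq_pow2 m k : (m ^ 2 = 2 ^ k)%N -> exists2 j, m = (2 ^ j)%N & k = (j + j)%N.
Proof.
move=> mk; have : (m %| 2 ^ k)%N by rewrite -mk dvdn_exp.
case/dvdn_pfactor => // j _ mE; exists j => //.
by apply/eqP; rewrite -(eqn_exp2l _ _ (isT : (1 < 2)%N)) -mk mE -expnM muln2 addnn.
Qed.

Lemma three_pow2_leq h d : (h <= d <= h + h)%N ->
  (3 * (2 ^ h - 1) <= (2 ^ d - 1) + 2 * (2 ^ (h + h - d) - 1))%N.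
Proof.
case/andP=> hd dhh; have pow_gt0 k : (0 < 2 ^ k)%N by rewrite expn_gt0.
have := pow_gt0 h; have := pow_gt0 (h + h - d)%N.
have [d_eq | [d_eq | d_ge]] : (d = h \/ d = h.+1 \/ h.+2 <= d)%N by lia.
- by rewrite d_eq addnK; lia.
- have h_gt0 : (0 < h)%N by lia.
  have := expnS 2 h; have := expnS 2 h.-1; rewrite prednK //.
  by rewrite d_eq (_ : h + h - h.+1 = h.-1)%N; lia.
- by have := leq_pexp2l (isT : (0 < 2)%N) d_ge; rewrite !expnS; lia.
Qed.

Lemma leq_sum_card_disjoint (I T : finType) (A : {pred I}) (S : I -> {set T}) (D : {set T}) :
  (forall i, i \in A -> S i \subset D) ->
  (forall i j x, i \in A -> j \in A -> x \in S i -> x \in S j -> i = j) ->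
  (\sum_(i in A) #|S i| <= #|D|)%N.
Proof.
move=> SD S_disj; rewrite -sum1_card.
have cardS i : i \in A -> #|S i| = (\sum_(x in D) (if x \in S i then 1 else 0))%N.
  move=> iA; rewrite -big_mkcondr sum1dep_card -cardsE; apply: eq_card => x.
  by rewrite !inE andb_idl // => /(subsetP (SD i iA)).
rewrite (eq_bigr _ cardS) exchange_big /=; apply: leq_sum => x _.
rewrite -big_mkcondr sum1dep_card; apply/card_le1_eqP => i j.
by rewrite !inE => /andP [iA xi] /andP [jA xj]; apply: S_disj xj xi.
Qed.

Section RowVectors.
Variables (K : fieldType) (n : nat).

Lemma dimvf_rV : \dim (fullv : {vspace 'rV[K]_n}) = n.
Proof. by rewrite dimvf /dim /= mul1n. Qed.

Lemma dimv_rV_leq (V : {vspace 'rV[K]_n}) : (\dim V <= n)%N.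
Proof. by have := dimvS (subvf V); rewrite dimvf_rV. Qed.

End RowVectors.

Section Subspaces.
Variables (K : fieldType) (vT : vectType K).
Implicit Types U V Z : {vspace vT}.

Lemma dimv_capv_sum_lb U (P1 P2 : {vspace vT}) : (P1 + P2)%VS = fullv ->
  (\dim U + \dim U <= \dim (fullv : {vspace vT}) + \dim (U :&: P1 + U :&: P2))%N.
Proof.
move=> P12.
have := dimv_sum_cap U P1; have := dimv_sum_cap U P2.
have := dimv_sum_cap (U :&: P1) (U :&: P2); have := dimv_sum_cap P1 P2.
have := dimvS (subvf (U + P1)); have := dimvS (subvf (U + P2)).
have := dimvS (capvS (capvSr U P1) (capvSr U P2)).
rewrite P12; lia.
Qed.

Lemma exists_subv_dim V k : (k <= \dim V)%N -> exists2 Z, (Z <= V)%VS & \dim Z = k.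
Proof.
move=> kV; exists <<take k (vbasis V)>>%VS.
  by apply/span_subvP => x /mem_take; apply: vbasis_mem.
have /eqP -> : free (take k (vbasis V)).
  by apply: (@catl_free _ _ (drop k (vbasis V))); rewrite cat_take_drop (basis_free (vbasisP V)).
by rewrite size_takel // size_tuple.
Qed.

Lemma capv_line_notin Z w :
  w \notin Z -> (Z :&: <[w]> = 0)%VS.
Proof.
move=> wZ; apply/eqP; rewrite -subv0; apply/subvP => x /memv_capP [xZ /vlineP [k xk]].
rewrite memv0 xk; have [-> | k_neq0] := eqVneq k 0; first by rewrite scale0r.
by case/negP: wZ; rewrite -(scalerK k_neq0 w) -xk memvZ.
Qed.

End Subspaces.

(** * Sign characters of F_2^n *)

Lemma F2_cases (t : 'F_2) : t = 0 \/ t = 1.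
Proof. by case: t => [[|[|m]]] // lt_t2; [left | right]; apply: val_inj. Qed.

Lemma pchar_F2 : 2 \in [pchar 'F_2].
Proof. exact: pchar_Fp. Qed.

Lemma card_vspace_F2 k (V : {vspace 'rV['F_2]_k}) : #|V| = (2 ^ \dim V)%N.
Proof. by rewrite card_vspace card_Fp. Qed.

Lemma card_vspace_nz_F2 k (V : {vspace 'rV['F_2]_k}) : #|[set x in V | x != 0]| = (2 ^ \dim V - 1)%N.
Proof.
rewrite -card_vspace_F2 -[#|V|]cardsE [in RHS](cardsD1 0) !inE mem0v add1n subn1 /=.
by apply: eq_card => x; rewrite !inE andbC.
Qed.

Lemma memv_add_line_F2 k (Z : {vspace 'rV['F_2]_k}) w x :
  (x \in (Z + <[w]>)%VS) = (x \in Z) || (x - w \in Z).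
Proof.
apply/idP/idP => [/memv_addP [z zZ [y /vlineP [t ->] ->]] | /orP [xZ | xwZ]].
- by case: (F2_cases t) => ->; rewrite ?scale0r ?addr0 ?scale1r ?addrK zZ ?orbT.
- by rewrite -[x]addr0 memv_add ?mem0v.
- by rewrite -[x](subrK w) memv_add ?memv_line.
Qed.

Definition signF2 (t : 'F_2) : int := (-1) ^+ t.

Lemma signF2D s t : signF2 (s + t) = signF2 s * signF2 t.
Proof. by case: (F2_cases s) => ->; case: (F2_cases t) => ->. Qed.

Lemma signF2_addKl s t : signF2 s * signF2 (s + t) = signF2 t.
Proof. by rewrite signF2D /signF2 signrMK. Qed.

Lemma signF2_neq0 t : signF2 t != 0.
Proof. by rewrite /signF2 signr_eq0. Qed.

Lemma sum_signF2_additive k (V : {vspace 'rV['F_2]_k}) (h : 'rV['F_2]_k -> 'F_2) :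
  {in V &, {morph h : x y / x + y}} ->
  \sum_(x in V) signF2 (h x) = if [forall x in V, h x == 0] then #|V|%:Z else 0.
Proof.
move=> hD; case: ifP => [/forall_inP h0 | /negbT/forall_inPn [e eV he0]].
  rewrite (eq_bigr (fun _ => 1)) => [|x /h0/eqP ->] //.
  by rewrite sumr_const natz.
have he1 : h e = 1 by case: (F2_cases (h e)) he0 => ->.
set S := \sum_(x in V) _.
suff : S *+ 2 = 0 by move/eqP; rewrite mulrn_eq0 => /eqP.
(* translation by [e] permutes [V] and flips every sign *)
have SN : S = - S.
  rewrite {1}/S (reindex_inj (addrI e)) /= -sumrN.
  apply: eq_big => [x | x xV]; first by rewrite rpredDl.
  have xeV : x \in V by rewrite -(rpredDl x eV).
  by rewrite hD // he1 signF2D mulN1r.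
by rewrite mulr2n {2}SN subrr.
Qed.

Section Dot.
Variable n : nat.
Implicit Types x y z w : 'rV['F_2]_n.

Lemma dotC x y : dot x y = dot y x.
Proof. by apply: eq_bigr => i _; rewrite mulrC. Qed.

Lemma dotDl x y z : dot (x + y) z = dot x z + dot y z.
Proof. by rewrite /dot -big_split; apply: eq_bigr => i _; rewrite mxE mulrDl. Qed.

Lemma dotDr x y z : dot z (x + y) = dot z x + dot z y.
Proof. by rewrite dotC dotDl !(dotC z). Qed.

Lemma dot0l x : dot 0 x = 0.
Proof. by rewrite /dot big1 // => i _; rewrite mxE mul0r. Qed.

Lemma dot0r x : dot x 0 = 0.
Proof. by rewrite dotC dot0l. Qed.

Lemma dot_trmx x y : dot x y = (x *m y^T) 0 0.
Proof. by rewrite mxE; apply: eq_bigr => i _; rewrite mxE. Qed.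

Lemma dot_delta x i : dot (delta_mx 0 i) x = x 0 i.
Proof.
rewrite /dot (bigD1 i) //= big1 => [|j ji]; first by rewrite mxE !eqxx mul1r addr0.
by rewrite mxE (negbTE ji) andbF mul0r.
Qed.

Lemma dot_nondegenerate w : (forall x, dot x w = 0) -> w = 0.
Proof. by move=> w0; apply/rowP => i; rewrite mxE -dot_delta. Qed.

Lemma sum_signF2_dot w :
  \sum_(x : 'rV['F_2]_n) signF2 (dot x w) = if w == 0 then (2 ^ n)%:Z else 0.
Proof.
rewrite (eq_bigl (fun x => x \in (fullv : {vspace 'rV['F_2]_n}))) => [|x]; last by rewrite memvf.
rewrite sum_signF2_additive => [|x y _ _]; last exact: dotDl.
rewrite card_vspace_F2 dimvf_rV; case: eqP => [-> | /eqP w0].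
  by rewrite ifT //; apply/forall_inP => x _; rewrite dot0r.
rewrite ifF //; apply: contraNF w0 => /forall_inP x0.
by apply/eqP/dot_nondegenerate => x; apply/eqP/x0; rewrite memvf.
Qed.

End Dot.

Lemma dot_mulmx m (u z : 'rV['F_2]_m) (M : 'M['F_2]_m) : dot u (z *m M) = dot (u *m M^T) z.
Proof. by rewrite !dot_trmx trmx_mul mulmxA. Qed.

Lemma dot_row_mx m k (a x : 'rV['F_2]_m) (b y : 'rV['F_2]_k) :
  dot (row_mx a b) (row_mx x y) = dot a x + dot b y.
Proof.
by rewrite /dot big_split_ord; congr (_ + _); apply: eq_bigr => i _;
  rewrite ?row_mxEl ?row_mxEr.
Qed.

(** * Walsh spectra and CCZ-equivalence *)

Lemma walshE n (f : 'rV['F_2]_n -> 'F_2) a : walsh f a = \sum_x signF2 (f x + dot x a).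
Proof. by []. Qed.

Lemma walsh_comp0 n (F : 'rV['F_2]_n -> 'rV['F_2]_n) a :
  walsh (comp_fun F 0) a = if a == 0 then (2 ^ n)%:Z else 0.
Proof.
rewrite walshE -sum_signF2_dot; apply: eq_bigr => x _.
by rewrite /comp_fun dot0l add0r.
Qed.

Lemma walsh_comp_bij n (F : 'rV['F_2]_n -> 'rV['F_2]_n) b :
  bijective F -> walsh (comp_fun F b) 0 = if b == 0 then (2 ^ n)%:Z else 0.
Proof.
move=> bijF; rewrite walshE -sum_signF2_dot [RHS](reindex F) /=; last exact: onW_bij.
by apply: eq_bigr => x _; rewrite /comp_fun dot0r addr0 dotC.
Qed.

Lemma walsh_eq0_not_bent n (f : 'rV['F_2]_n -> 'F_2) a : walsh f a = 0 -> ~~ bent f.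
Proof.
move=> fa0; apply/forallP => /(_ a); rewrite fa0 normr0 eq_sym.
by rewrite -[0]/(0%:Z) eqz_nat expn_eq0.
Qed.

Lemma bent_walsh n (f : 'rV['F_2]_n -> 'F_2) a : bent f -> `|walsh f a| = (2 ^ n./2)%:Z.
Proof. by move/forallP/(_ a)/eqP. Qed.

Lemma comp0_not_bent n (F : 'rV['F_2]_n -> 'rV['F_2]_n) : (0 < n)%N -> ~~ bent (comp_fun F 0).
Proof.
move=> n_gt0; apply/negP => /(bent_walsh 0); rewrite walsh_comp0 eqxx.
move/eqP; rewrite -abszE eqz_nat eqn_exp2l // => /eqP n_half.
by have := ltn_Pdiv (isT : (1 < 2)%N) n_gt0; rewrite divn2 -n_half ltnn.
Qed.

Definition graph_walsh n (F : 'rV['F_2]_n -> 'rV['F_2]_n) (u : 'rV['F_2]_(n + n)) : int :=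
  \sum_(z in graph F) signF2 (dot u z).

Lemma graph_walsh_row_mx n (F : 'rV['F_2]_n -> 'rV['F_2]_n) a b :
  graph_walsh F (row_mx a b) = walsh (comp_fun F b) a.
Proof.
rewrite /graph_walsh big_imset /=; last by move=> x y _ _ /eq_row_mx [].
by apply: eq_bigr => x _; rewrite dot_row_mx addrC (dotC a).
Qed.

Lemma graph_walsh_ccz n (F G : 'rV['F_2]_n -> 'rV['F_2]_n) (M : 'M['F_2]_(n + n)) v u :
  M \in unitmx -> [set z *m M + v | z in graph F] = graph G ->
  graph_walsh G u = signF2 (dot u v) * graph_walsh F (u *m M^T).
Proof.
move=> Mu FG; rewrite /graph_walsh -FG big_imset /=; last first.
  by move=> z1 z2 _ _ /addIr /(can_inj (mulmxK Mu)).
rewrite mulr_sumr; apply: eq_bigr => z _.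
by rewrite dotDr signF2D dot_mulmx mulrC.
Qed.

Lemma NF_of_ccz_graph_walsh0 n (F G : 'rV['F_2]_n -> 'rV['F_2]_n) (M : 'M['F_2]_(n + n)) v u :
  M \in unitmx -> [set z *m M + v | z in graph F] = graph G ->
  graph_walsh G u = 0 -> rsubmx (u *m M^T) != 0 -> rsubmx (u *m M^T) \in NF F.
Proof.
move=> Mu FG Gu0 b_neq0; rewrite inE b_neq0 /=.
apply: (@walsh_eq0_not_bent _ _ (lsubmx (u *m M^T))).
rewrite -graph_walsh_row_mx hsubmxK.
apply/eqP; move/eqP: Gu0; rewrite (graph_walsh_ccz _ Mu FG).
by rewrite mulf_eq0 (negbTE (signF2_neq0 _)).
Qed.

Lemma ccz_perm_NF_spaces n (F : 'rV['F_2]_n -> 'rV['F_2]_n) :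
  (exists G : 'rV['F_2]_n -> 'rV['F_2]_n, bijective G /\ CCZ_equiv F G) ->
  exists P1 P2 : {vspace 'rV['F_2]_n}, [/\ (P1 + P2)%VS = fullv,
    {in P1, forall b, b != 0 -> b \in NF F} & {in P2, forall b, b != 0 -> b \in NF F}].
Proof.
move=> [G [bijG [M [v [Mu FG]]]]].
pose X1 := rsubmx (row_mx 1%:M 0 *m M^T) : 'M_n.
pose X2 := rsubmx (row_mx 0 1%:M *m M^T) : 'M_n.
have X1E a : a *m X1 = rsubmx (row_mx a 0 *m M^T).
  by rewrite mulmx_rsub mulmxA mul_mx_row mulmx1 mulmx0.
have X2E a : a *m X2 = rsubmx (row_mx 0 a *m M^T).
  by rewrite mulmx_rsub mulmxA mul_mx_row mulmx1 mulmx0.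
exists (limg (linfun (mulmxr X1))), (limg (linfun (mulmxr X2))); split.
- apply/eqP; rewrite eqEsubv subvf /=; apply/subvP => y _.
  pose w := row_mx 0 y *m invmx M^T.
  have -> : y = lsubmx w *m X1 + rsubmx w *m X2.
    rewrite X1E X2E -linearD /= -mulmxDl add_row_mx addr0 add0r hsubmxK.
    by rewrite /w mulmxKV ?unitmx_tr // row_mxKr.
  apply: memv_add; apply/memv_imgP; [exists (lsubmx w) | exists (rsubmx w)];
    by rewrite ?memvf ?lfunE.
- move=> _ /memv_imgP [a _ ->]; rewrite lfunE /= X1E => b_neq0.
  have a_neq0 : a != 0 by apply: contraNneq b_neq0 => ->; rewrite row_mx0 mul0mx linear0.
  apply: NF_of_ccz_graph_walsh0 Mu FG _ b_neq0.
  by rewrite graph_walsh_row_mx walsh_comp0 (negbTE a_neq0).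
- move=> _ /memv_imgP [a _ ->]; rewrite lfunE /= X2E => b_neq0.
  have a_neq0 : a != 0 by apply: contraNneq b_neq0 => ->; rewrite row_mx0 mul0mx linear0.
  apply: NF_of_ccz_graph_walsh0 Mu FG _ b_neq0.
  by rewrite graph_walsh_row_mx walsh_comp_bij // (negbTE a_neq0).
Qed.

(** * Quadratic functions *)

Definition qform n (A : 'M['F_2]_n) (x : 'rV['F_2]_n) : 'F_2 :=
  \sum_(i < n) \sum_(j < n) A i j * x 0 i * x 0 j.

Lemma qform0 n (A : 'M['F_2]_n) : qform A 0 = 0.
Proof. by rewrite /qform big1 // => i _; rewrite big1 // => j _; rewrite !mxE mulr0. Qed.

Lemma qformD n (A : 'M['F_2]_n) x e :
  qform A (x + e) = qform A x + qform A e + dot x (e *m (A + A^T)).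
Proof.
have -> : dot x (e *m (A + A^T)) = \sum_i \sum_j A i j * x 0 i * e 0 j
                                  + \sum_i \sum_j A i j * e 0 i * x 0 j.
  rewrite [X in _ = _ + X]exchange_big -big_split /=; apply: eq_bigr => i _.
  rewrite -big_split mxE big_distrr /=; apply: eq_bigr => j _.
  by rewrite !mxE; ring.
rewrite /qform -!big_split /=; apply: eq_bigr => i _.
by rewrite -!big_split /=; apply: eq_bigr => j _; rewrite !mxE; ring.
Qed.

Definition radical n (A : 'M['F_2]_n) : {vspace 'rV['F_2]_n} :=
  lker (linfun (mulmxr (A + A^T))).

Lemma mem_radical n (A : 'M['F_2]_n) e : (e \in radical A) = (e *m (A + A^T) == 0).
Proof. by rewrite memv_ker lfunE. Qed.

Section QuadraticFunction.
Variables (n : nat) (f : 'rV['F_2]_n -> 'F_2) (A : 'M['F_2]_n) (c : 'rV['F_2]_n) (d : 'F_2).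
Hypothesis fE : forall x, f x = qform A x + dot c x + d.

Lemma quadratic_polar x e : f (x + e) = f x + f e + f 0 + dot x (e *m (A + A^T)).
Proof.
rewrite !fE qformD qform0 dotDr dot0r !add0r -[LHS]addr0 -(addrr_pchar2 pchar_F2 d).
by ring.
Qed.

Let rad_form a e := dot e a + f e + f 0.

Lemma sqr_walsh_quadratic a : walsh f a ^+ 2 = (2 ^ n)%:Z * \sum_(e in radical A) signF2 (rad_form a e).
Proof.
(* substituting [y = x + e] in the double sum leaves a character sum in [x] *)
have sign_xe x e : signF2 (f x + dot x a) * signF2 (f (x + e) + dot (x + e) a) =
    signF2 (dot x (e *m (A + A^T))) * signF2 (rad_form a e).
  have -> : f (x + e) + dot (x + e) a =
      (f x + dot x a) + (dot x (e *m (A + A^T)) + rad_form a e).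
    by rewrite quadratic_polar dotDl /rad_form; ring.
  by rewrite signF2_addKl signF2D.
rewrite expr2 {1}walshE mulr_suml.
under eq_bigr => x _ do rewrite walshE mulr_sumr (reindex_inj (addrI x)) /=.
under eq_bigr => x _ do under eq_bigr => e _ do rewrite sign_xe.
rewrite exchange_big /= mulr_sumr [RHS]big_mkcond /=; apply: eq_bigr => e _.
rewrite -mulr_suml sum_signF2_dot mem_radical.
by case: eqP; rewrite ?mul0r.
Qed.

Lemma rad_form_additive a : {in radical A &, {morph rad_form a : x y / x + y}}.
Proof.
move=> x y _; rewrite mem_radical => /eqP yA.
by rewrite /rad_form quadratic_polar yA dot0r addr0 dotDl; ring.
Qed.

Lemma sqr_walsh_quadratic_cases a : walsh f a ^+ 2 = (2 ^ n)%:Z *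
  (if [forall e in radical A, rad_form a e == 0] then (2 ^ \dim (radical A))%:Z else 0).
Proof.
by rewrite sqr_walsh_quadratic sum_signF2_additive ?card_vspace_F2 //; apply: rad_form_additive.
Qed.

Lemma quadratic_not_bent_dvd_walsh a :
  ~~ odd n -> ~~ bent f -> (2 ^ (n./2).+1 %| `|walsh f a|)%N.
Proof.
move=> n_even f_not_bent; have n_half := addn_half_even n_even.
have [rad0 | rad_gt0] := posnP (\dim (radical A)).
  case/negP: f_not_bent; apply/forallP => a'.
  have : walsh f a' ^+ 2 = (2 ^ n)%:Z.
    have rad_eq0 : radical A = 0%VS by apply/eqP; rewrite -dimv_eq0 rad0.
    rewrite sqr_walsh_quadratic_cases rad0 ifT ?mulr1 //; apply/forall_inP => e.
    by rewrite rad_eq0 memv0 => /eqP ->; rewrite /rad_form dot0l add0r addrr_pchar2 ?pchar_F2.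
  move/(congr1 absz); rewrite abszX => /sqrn_eq_pow2 [j Wj nj].
  by rewrite -abszE Wj nj addnn half_double.
move: (sqr_walsh_quadratic_cases a); case: ifP => _; last first.
  by rewrite mulr0 => /eqP; rewrite sqrf_eq0 => /eqP ->.
rewrite -PoszM -expnD => /(congr1 absz); rewrite abszX => /sqrn_eq_pow2 [j -> nrj].
rewrite dvdn_exp2l //; lia.
Qed.

End QuadraticFunction.

Lemma dvdz_sum_walsh0 n (F : 'rV['F_2]_n -> 'rV['F_2]_n) (U : {vspace 'rV['F_2]_n}) :
  ((2 ^ \dim U)%:Z %| \sum_(b in U) walsh (comp_fun F b) 0)%Z.
Proof.
under eq_bigr => b _ do rewrite walshE.
rewrite exchange_big /=; apply: rpred_sum => x _.
under eq_bigr => b _ do rewrite /comp_fun dot0r addr0.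
rewrite sum_signF2_additive => [|b b' _ _]; last exact: dotDl.
by case: ifP => _; rewrite ?rpred0 // card_vspace_F2 dvdzz.
Qed.

Lemma dvdz_walsh0_sub_bent n (f : 'rV['F_2]_n -> 'F_2) :
  ~~ odd n -> quadratic_fun f ->
  ((2 ^ (n./2).+1)%:Z %| walsh f 0 - (if bent f then (2 ^ n./2)%:Z else 0))%Z.
Proof.
move=> n_even [A [c [d fE]]]; case: ifP => [f_bent | /negbT f_not_bent]; last first.
  by rewrite subr0 dvdzE (quadratic_not_bent_dvd_walsh fE).
have /eqP := bent_walsh 0 f_bent; rewrite eqr_norml => /andP [/orP [] /eqP -> _].
  by rewrite subrr rpred0.
by rewrite -opprD rpredN -PoszD dvdzE /= expnS mul2n addnn.
Qed.

Section ParityOnSubspaces.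
Variables (n : nat) (F : 'rV['F_2]_n -> 'rV['F_2]_n) (U : {vspace 'rV['F_2]_n}).
Hypotheses (n_even : ~~ odd n) (F_quad : quadratic F) (dimU : \dim U = (n./2).+1).

Lemma even_card_bent_vspace : ~~ odd #|[set b in U | bent (comp_fun F b)]|.
Proof.
have dvd_bent : ((2 ^ (n./2).+1)%:Z %|
                   \sum_(b in U) if bent (comp_fun F b) then (2 ^ n./2)%:Z else 0)%Z.
  rewrite -[X in (_ %| X)%Z](subKr (\sum_(b in U) walsh (comp_fun F b) 0)) -sumrB.
  apply: rpredB; first by rewrite -dimU dvdz_sum_walsh0.
  by apply: rpred_sum => b _; apply: dvdz_walsh0_sub_bent.
move: dvd_bent; rewrite -big_mkcondr sumr_const -mulr_natr natz -PoszM dvdzE /=.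
rewrite expnS mulnC dvdn_pmul2l ?expn_gt0 // dvdn2.
by rewrite cardsE.
Qed.

Lemma odd_card_NF_vspace : (0 < n)%N -> odd #|[set b in NF F | b \in U]|.
Proof.
move=> n_gt0.
have := cardID [pred b | bent (comp_fun F b)] U.
have -> : #|[predI U & [pred b | bent (comp_fun F b)]]| = #|[set b in U | bent (comp_fun F b)]|.
  by apply: eq_card => b; rewrite !inE.
have -> : #|[predD U & [pred b | bent (comp_fun F b)]]| = #|0 |: [set b in NF F | b \in U]|.
  apply: eq_card => b; rewrite !inE; have [-> | b_neq0] := eqVneq b 0.
    by rewrite mem0v comp0_not_bent.
  by rewrite andbC.
rewrite cardsU1 !inE eqxx card_vspace_F2 dimU => /(congr1 odd).
by rewrite oddX /= !oddD (negbTE even_card_bent_vspace) /=; case: odd.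
Qed.

End ParityOnSubspaces.

(** * Blocking sets *)

Section BlockingSet.
Variables (n : nat) (B : {set 'rV['F_2]_n}).
Hypotheses (n_even : ~~ odd n) (B0 : 0 \notin B)
  (B_odd : forall U : {vspace 'rV['F_2]_n}, \dim U = (n./2).+1 -> odd #|[set b in B | b \in U]|).

Lemma card_capv_punct_sub V P : (V <= P)%VS -> {in P, forall b, b != 0 -> b \in B} ->
  #|[set b in B | b \in V]| = (2 ^ \dim V - 1)%N.
Proof.
move=> VP BP; rewrite -card_vspace_nz_F2; apply: eq_card => x; rewrite !inE.
have [-> | x_neq0] := eqVneq x 0; first by rewrite (negbTE B0) andbF.
by rewrite andbT andb_idl // => xV; rewrite BP ?(subvP VP).
Qed.

Lemma three_le_card_capv P1 P2 U : (P1 + P2)%VS = fullv ->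
  {in P1, forall b, b != 0 -> b \in B} -> {in P2, forall b, b != 0 -> b \in B} ->
  \dim U = (n./2).+1 -> (3 <= #|[set b in B | b \in U]|)%N.
Proof.
move=> P12 BP1 BP2 dimU; have := B_odd dimU.
set S := [set b in B | b \in U]; suff : (2 <= #|S|)%N by case: #|S| => [|[|[]]].
rewrite leqNgt; apply/negP => S_le1.
have [p Sp] : exists p, {in S, forall x, x = p}.
  have [-> | [p pS]] := set_0Vmem S; first by exists 0 => x; rewrite inE.
  by exists p => x xS; apply: (card_le1_eqP S_le1).
have UP_line (P : {vspace _}) : {in P, forall b, b != 0 -> b \in B} -> (U :&: P <= <[p]>)%VS.
  move=> BP; apply/subvP => u /memv_capP [uU uP].
  have [-> | u_neq0] := eqVneq u 0; first exact: mem0v.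
  by rewrite (Sp u) ?memv_line // inE BP // uU.
have /dimvS : (U :&: P1 + U :&: P2 <= <[p]>)%VS by rewrite subv_add !UP_line.
have := dimv_capv_sum_lb U P12; have := addn_half_even n_even.
rewrite dimvf_rV dim_vline dimU; case: (p != 0) => /=; lia.
Qed.

Lemma two_le_card_coset P Z w : (Z <= P)%VS -> \dim Z = n./2 -> (0 < n./2)%N ->
  {in P, forall b, b != 0 -> b \in B} -> w \in B -> w \notin Z ->
  (2 <= #|[set x in B | (x - w)%R \in Z]|)%N.
Proof.
move=> ZP dimZ h_gt0 BP wB wZ.
have w_neq0 : w != 0 by apply: contraNneq wZ => ->; rewrite mem0v.
have dimZw : \dim (Z + <[w]>) = (n./2).+1.
  by rewrite dimv_disjoint_sum ?capv_line_notin // dim_vline w_neq0 dimZ addn1.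
set S := [set x in B | x - w \in Z].
have ZS : [set b in B | b \in (Z + <[w]>)%VS] = [set b in B | b \in Z] :|: S.
  by apply/setP => x; rewrite !inE memv_add_line_F2 andb_orr.
have ZS0 : [set b in B | b \in Z] :&: S = set0.
  apply/setP => x; rewrite !inE; apply/negP => /and3P [/andP [_ xZ] _ xwZ].
  by case/negP: wZ; rewrite -(rpredBl _ xZ).
have odd_BZ : odd #|[set b in B | b \in Z]|.
  by rewrite (card_capv_punct_sub ZP BP) dimZ oddB ?expn_gt0 // oddX orbF eqn0Ngt h_gt0.
have := B_odd dimZw; rewrite ZS cardsU ZS0 cards0 subn0 oddD odd_BZ /=.
have : (0 < #|S|)%N by apply/card_gt0P; exists w; rewrite inE wB subrr mem0v.
by case: #|S| => [|[|]].
Qed.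

Lemma card_ge_of_large_summand P1 P2 : (P1 + P2)%VS = fullv ->
  {in P1, forall b, b != 0 -> b \in B} -> {in P2, forall b, b != 0 -> b \in B} ->
  (n./2 <= \dim P1)%N -> (3 * (2 ^ n./2 - 1) <= #|B|)%N.
Proof.
move=> P12 BP1 BP2 h_le_d1.
have [-> | h_gt0] := posnP n./2; first by [].
have [Z ZP1 dimZ] := exists_subv_dim h_le_d1.
set W := (P2 :\: P1)%VS.
have W_P1 w : w \in W -> w \in P1 -> w = 0.
  by move=> wW wP1; apply/eqP; rewrite -memv0 -(capv_diff P2 P1); apply/memv_capP.
have dimW : \dim W = (n - \dim P1)%N.
  have := dimv_sum_cap P1 P2; have := dimv_cap_compl P2 P1.
  by rewrite P12 dimvf_rV capvC -/W; lia.
set Ws := [set w in W | w != 0].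
pose coset w := [set x in B | (x - w)%R \in Z].
(* [coset w] is [B] meet [w + Z]; for nonzero [w] in [W] these are disjoint and avoid [P1] *)
have sum_cosets : (\sum_(w in Ws) #|coset w| <= #|[set b in B | b \notin P1]|)%N.
  apply: leq_sum_card_disjoint => [w | w1 w2 x].
    rewrite inE => /andP [wW w_neq0]; apply/subsetP => x; rewrite !inE => /andP [-> xwZ] /=.
    apply: contra w_neq0 => xP1; apply/eqP/W_P1 => //.
    by rewrite -(rpredBl _ xP1) (subvP ZP1).
  rewrite !inE => /andP [w1W _] /andP [w2W _] /andP [_ xw1Z] /andP [_ xw2Z].
  apply/eqP; rewrite -subr_eq0; apply/eqP/W_P1; first exact: memvB.
  have -> : w1 - w2 = (x - w2) - (x - w1) by rewrite opprB [RHS]addrC addrA subrK.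
  by apply/(subvP ZP1)/memvB.
have cosets_ge2 : (\sum_(w in Ws) 2 <= \sum_(w in Ws) #|coset w|)%N.
  apply: leq_sum => w; rewrite inE => /andP [wW w_neq0].
  have wP2 : w \in P2 := subvP (diffvSl P2 P1) w wW.
  have wZ : w \notin Z.
    by apply: contra w_neq0 => wZ; apply/eqP/W_P1 => //; apply: (subvP ZP1).
  exact: two_le_card_coset ZP1 dimZ h_gt0 BP1 (BP2 w wP2 w_neq0) wZ.
rewrite sum_nat_const card_vspace_nz_F2 dimW in cosets_ge2.
rewrite -(cardsID [set b | b \in P1] B) -setIdE (card_capv_punct_sub (subvv P1) BP1).
have -> : B :\: [set b | b \in P1] = [set b in B | b \notin P1].
  by apply/setP => x; rewrite !inE andbC.
have := three_pow2_leq (_ : n./2 <= \dim P1 <= n./2 + n./2)%N.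
rewrite addn_half_even // h_le_d1 dimv_rV_leq => /(_ isT) /leq_trans; apply.
by rewrite leq_add2l mulnC (leq_trans cosets_ge2 sum_cosets).
Qed.

Lemma card_ge_of_sum_full P1 P2 : (P1 + P2)%VS = fullv ->
  {in P1, forall b, b != 0 -> b \in B} -> {in P2, forall b, b != 0 -> b \in B} ->
  (3 * (2 ^ n./2 - 1) <= #|B|)%N.
Proof.
move=> P12 BP1 BP2; have [h_le_d1 | d1_lt_h] := leqP n./2 (\dim P1).
  exact: card_ge_of_large_summand P12 BP1 BP2 h_le_d1.
apply: (@card_ge_of_large_summand P2 P1) => //; first by rewrite addvC.
have := dimv_sum_cap P1 P2; have := dimv_rV_leq (P1 :&: P2).
have := addn_half_even n_even; rewrite P12 dimvf_rV; lia.
Qed.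

End BlockingSet.

Theorem mainTheorem20 (n : nat) (F : 'rV['F_2]_n -> 'rV['F_2]_n) :
  ~~ odd n ->
  quadratic F ->
  (exists G : 'rV['F_2]_n -> 'rV['F_2]_n, bijective G /\ CCZ_equiv F G) ->
  (3 * (2 ^ n./2 - 1) <= #|NF F|)%N /\
  (forall U : {vspace 'rV['F_2]_n}, \dim U = (n./2 + 1)%N ->
     (3 <= #|[set b in NF F | b \in U]|)%N).
Proof.
move=> n_even F_quad F_ccz_perm.
have [P1 [P2 [P12 NF_P1 NF_P2]]] := ccz_perm_NF_spaces F_ccz_perm.
have [n0 | n_gt0] := posnP n.
  split=> [|U]; first by rewrite (_ : n./2 = 0%N) ?n0.
  by move=> dimU; have := dimv_rV_leq U; rewrite dimU; lia.
have NF_0 : 0 \notin NF F by rewrite inE eqxx.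
have NF_odd (U : {vspace 'rV['F_2]_n}) : \dim U = (n./2).+1 -> odd #|[set b in NF F | b \in U]|.
  by move=> dimU; apply: odd_card_NF_vspace.
split; first exact: (card_ge_of_sum_full n_even NF_0 NF_odd P12 NF_P1 NF_P2).
by move=> U; rewrite addn1; apply: (three_le_card_capv n_even NF_0 NF_odd P12 NF_P1 NF_P2).
Qed.
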